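(* For any positive integers $n,p$ and any $k\ge 3$ (possibly $k=\infty$), there exists a path system $S$ with $n$ nodes, $p$ paths, bridge girth $>k$, size $\|S\|=\Theta(\beta(n,p,k))$, and no $2$-cycles.
   Context: A path system is a pair $S=(V,\Pi)$ where $V$ is a finite ground set of nodes and $\Pi$ is a multiset of finite sequences of nodes (paths), each containing each node at most once. The size is $\|S\|=\sum_{\pi\in\Pi}|\pi|$ ($|\pi|$ = number of nodes of $\pi$). Write $x<_\pi y$ if $x,y\in\pi$ and $x$ strictly precedes $y$ in $\pi$. A $b$-bridge consists of $b$ distinct nodes $v_1,\dots,v_b$ and $b$ distinct paths $\pi_1,\dots,\pi_b$ with $v_i<_{\pi_i}v_{i+1}$ for $1\le i\le b-1$ and $v_1<_{\pi_b}v_b$. The bridge girth is the least $b$ for which there is a $b$-bridge ($\infty$ if none). $\beta(n,p,k)$ is the maximum possible size of a path system with $n$ nodes, $p$ paths and bridge girth $>k$. A $2$-cycle in a path system is a pair of nodes $u,v$ and a pair of paths $\pi_1,\pi_2$ with $u<_{\pi_1}v$ and $v<_{\pi_2}u$. *)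

From mathcomp Require Import all_boot.
Set Implicit Arguments. Unset Strict Implicit. Unset Printing Implicit Defensive.

(* A path system with ground set V = 'I_n and a multiset of p paths,
   represented as a p-tuple (paths indexed by 'I_p, repetitions allowed). *)
Definition path_system (n p : nat) := p.-tuple (seq 'I_n).

Definition valid_ps n p (S : path_system n p) : bool := all uniq S.

Definition ps_size n p (S : path_system n p) : nat := sumn (map size S).

Definition prec n (pi : seq 'I_n) (x y : 'I_n) : bool :=
  [&& x \in pi, y \in pi & index x pi < index y pi].

Definition path_of n p (S : path_system n p) (i : 'I_p) : seq 'I_n := tnth S i.

(* A b-bridge, b = b'.+1, with 0-based indices: distinct nodes v_0..v_b',
   distinct paths (distinct indices in the multiset) q_0..q_b',
   v_i <_{q_i} v_{i+1} for i < b', and v_0 <_{q_b'} v_b'. *)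
Definition has_bridge n p (S : path_system n p) (b : nat) : Prop :=
  exists b', b = b'.+1 /\
  exists (v : 'I_b'.+1 -> 'I_n) (q : 'I_b'.+1 -> 'I_p),
    injective v /\ injective q /\
    (forall i : 'I_b',
        prec (path_of S (q (widen_ord (leqnSn b') i)))
             (v (widen_ord (leqnSn b') i)) (v (lift ord0 i))) /\
    prec (path_of S (q ord_max)) (v ord0) (v ord_max).

(* k : option nat, with None standing for k = infinity. *)
Definition le_ext (b : nat) (k : option nat) : Prop :=
  match k with Some k => b <= k | None => True end.

Definition girth_gt n p (S : path_system n p) (k : option nat) : Prop :=
  forall b, le_ext b k -> ~ has_bridge S b.

Definition no_2cycle n p (S : path_system n p) : Prop :=
  forall (i j : 'I_p) (u v : 'I_n),
    ~ (prec (path_of S i) u v /\ prec (path_of S j) v u).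

(* admissible systems for beta(n,p,k) *)
Definition admissible n p (k : option nat) (S : path_system n p) : Prop :=
  valid_ps S /\ girth_gt S k.

From mathcomp Require Import all_boot.
From mathcomp Require Import zify.
From Stdlib Require Import Classical.

Set Implicit Arguments. Unset Strict Implicit. Unset Printing Implicit Defensive.

(* Take an admissible system S of maximum size. Say that path j reverses path i
   at x if y <_i x and x <_j y for some y. Bridge girth > 3 forces, for every
   occurrence of x on path i, at most one path j reversing i at x: two such
   paths would give a 2-bridge (same y) or a 3-bridge (distinct y's).
   Deleting x from path i whenever its reversing path has a larger (resp.
   smaller) index yields two subsystems of S without 2-cycles; they keep the
   bridge girth of S and every occurrence survives in at least one of them,
   so the larger one has size at least ||S||/2 = beta(n,p,k)/2. *)

Lemma bounded_ex_max (P : nat -> Prop) B :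
  P 0 -> (forall t, P t -> t <= B) -> exists2 t, P t & forall t', P t' -> t' <= t.
Proof.
move=> P0; elim: B => [|B IH] leB; first by exists 0.
have [PB1|nPB1] := classic (P B.+1); first by exists B.+1.
apply: IH => t Pt; have := leB t Pt; rewrite leq_eqVlt ltnS.
by case/orP=> [/eqP eBt|//]; case: nPB1; rewrite -eBt.
Qed.

Section PathSystems.
Variables n p : nat.
Implicit Types (s : seq 'I_n) (x y z : 'I_n) (S : path_system n p).

Lemma prec_asym s x y : prec s x y -> ~~ prec s y x.
Proof. by case/and3P=> _ _ ltxy; apply/negP => /and3P[_ _]; rewrite ltnNge ltnW. Qed.

Lemma prec_neq s x y : prec s x y -> x != y.
Proof. by apply: contraTneq => ->; apply/negP => yy; case/negP: (prec_asym yy). Qed.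

Lemma prec_total s x y : x \in s -> y \in s -> x != y -> prec s x y || prec s y x.
Proof.
move=> xs ys; rewrite /prec xs ys /=; apply: contraNT.
rewrite negb_or -!leqNgt => /andP[le_yx le_xy].
by apply/eqP/(index_inj x xs ys)/anti_leq; rewrite le_xy le_yx.
Qed.

Lemma prec_cons z s x y :
  prec (z :: s) x y = (z != y) && ((z == x) && (y \in s) || prec s x y).
Proof.
rewrite /prec /= !inE !(eq_sym z).
case: (eqVneq x z) => [->|xz]; case: (eqVneq y z) => [->|yz] //=.
- by rewrite ltn0Sn andbT; case: (y \in s); rewrite /= ?andbF.
- by rewrite ltn0 andbF.
Qed.

Lemma prec_filter (a : pred 'I_n) s x y : prec (filter a s) x y -> prec s x y.
Proof.
elim: s => [//|z s IH] /=; rewrite prec_cons.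
case: ifP => [az|naz prec_xy]; last first.
  have [_ y_in _] := and3P prec_xy.
  rewrite (IH prec_xy) orbT andbT; apply: contraTneq y_in => <-.
  by rewrite mem_filter naz.
rewrite prec_cons mem_filter => /andP[-> /orP[/and3P[-> _ ->] //|/IH ->]].
by rewrite orbT.
Qed.

Lemma bridge_of_seq S b (vs : seq 'I_n) (qs : seq 'I_p) (x0 : 'I_n) (j0 : 'I_p) :
  size vs = b.+1 -> size qs = b.+1 -> uniq vs -> uniq qs ->
  (forall i, i < b -> prec (path_of S (nth j0 qs i)) (nth x0 vs i) (nth x0 vs i.+1)) ->
  prec (path_of S (nth j0 qs b)) (nth x0 vs 0) (nth x0 vs b) ->
  has_bridge S b.+1.
Proof.
move=> szv szq uv uq steps last_step; exists b; split=> //.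
have nth_inj (T : eqType) (s : seq T) d : size s = b.+1 -> uniq s ->
    injective (fun i : 'I_b.+1 => nth d s i).
  move=> szs us i j /eqP; rewrite nth_uniq ?szs // => /eqP; exact: val_inj.
exists (fun i : 'I_b.+1 => nth x0 vs i), (fun i : 'I_b.+1 => nth j0 qs i).
do 2 (split; first exact: nth_inj).
by split=> [i|//]; apply: steps (ltn_ord i).
Qed.

Lemma bridge2 S x y (j j' : 'I_p) :
  j != j' -> prec (path_of S j) x y -> prec (path_of S j') x y -> has_bridge S 2.
Proof.
move=> jj' prec_j prec_j'.
apply: (@bridge_of_seq _ 1 [:: x; y] [:: j; j'] x j) => //=.
- by rewrite inE (prec_neq prec_j).
- by rewrite inE jj'.
- by case.
Qed.

Lemma bridge3 S x y z (j1 j2 j3 : 'I_p) :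
  uniq [:: x; y; z] -> uniq [:: j1; j2; j3] ->
  prec (path_of S j1) x y -> prec (path_of S j2) y z -> prec (path_of S j3) x z ->
  has_bridge S 3.
Proof.
move=> uv uq xy yz xz.
by apply: (@bridge_of_seq _ 2 _ _ x j1 _ _ uv uq) => // -[|[|]].
Qed.

Lemma bridge23_of_girth S k :
  (match k with Some k0 => 3 <= k0 | None => true end) -> girth_gt S k ->
  ~ has_bridge S 2 /\ ~ has_bridge S 3.
Proof. by case: k => [k0|] k3 girthS; split; apply: girthS => //=; lia. Qed.

Definition reverses S (i j : 'I_p) x : bool :=
  [exists y, prec (path_of S i) y x && prec (path_of S j) x y].

Lemma reverses_uniq S i j j' x :
  ~ has_bridge S 2 -> ~ has_bridge S 3 ->
  reverses S i j x -> reverses S i j' x -> j = j'.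
Proof.
move=> no2 no3 /existsP[y /andP[yx xy]] /existsP[y' /andP[y'x xy']].
apply/eqP/negPn/negP => jj'.
have path_neq (l : 'I_p) w : prec (path_of S i) w x -> prec (path_of S l) x w -> l != i.
  by move=> wx xw; apply: contraTneq wx => <-; exact: prec_asym.
have ji := path_neq _ _ yx xy; have j'i := path_neq _ _ y'x xy'.
have [eyy'|yy'] := eqVneq y y'.
  by apply: no2; rewrite -eyy' in xy'; exact: bridge2 jj' xy xy'.
have [yi _ _] := and3P yx; have [y'i _ _] := and3P y'x.
have nx := prec_neq xy; have nx' := prec_neq xy'.
case/orP: (prec_total yi y'i yy') => [yy'i|y'yi]; apply: no3.
- apply: (bridge3 _ _ xy yy'i xy').
    by rewrite /= !inE negb_or nx nx' yy'.
  by rewrite /= !inE negb_or ji jj' eq_sym j'i.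
- apply: (bridge3 _ _ xy' y'yi xy).
    by rewrite /= !inE negb_or nx nx' eq_sym yy'.
  by rewrite /= !inE negb_or j'i eq_sym jj' eq_sym ji.
Qed.

Definition pruned S (r : rel 'I_p) (i : 'I_p) : pred 'I_n :=
  fun x => [exists j, r i j && reverses S i j x].

Definition prune S (r : rel 'I_p) : path_system n p :=
  [tuple filter (predC (pruned S r i)) (tnth S i) | i < p].

Lemma prec_prune S r i x y : prec (path_of (prune S r) i) x y ->
  [/\ prec (path_of S i) x y, ~~ pruned S r i x & ~~ pruned S r i y].
Proof.
rewrite /path_of tnth_mktuple => prec_xy; split; first exact: prec_filter prec_xy.
  by case/and3P: prec_xy; rewrite mem_filter => /andP[].
by case/and3P: prec_xy => _; rewrite mem_filter => /andP[].
Qed.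

Lemma valid_prune S r : valid_ps S -> valid_ps (prune S r).
Proof.
by move=> /all_tnthP uS; apply/all_tnthP => i; rewrite tnth_mktuple filter_uniq.
Qed.

Lemma girth_gt_prec_mono S S' k :
  (forall i x y, prec (path_of S' i) x y -> prec (path_of S i) x y) ->
  girth_gt S k -> girth_gt S' k.
Proof.
move=> mono girthS b le_bk [b' [eb [v [q [inj_v [inj_q [steps last_step]]]]]]].
apply: (girthS b le_bk); exists b'; split=> //; exists v, q.
by do 2 split=> //; split=> [i|]; apply: mono.
Qed.

Lemma girth_gt_prune S r k : girth_gt S k -> girth_gt (prune S r) k.
Proof. by apply: girth_gt_prec_mono => i x y /prec_prune[]. Qed.

Lemma admissible_prune S r k : admissible k S -> admissible k (prune S r).
Proof. by case=> validS girthS; split; [exact: valid_prune | exact: girth_gt_prune]. Qed.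

Lemma no_2cycle_prune S r :
  (forall i j, i != j -> r i j || r j i) -> no_2cycle (prune S r).
Proof.
move=> r_total i j u v [/prec_prune[uv _ nv] /prec_prune[vu _ nu]].
have [eij|ij] := eqVneq i j; first by subst j; case/negP: (prec_asym uv).
case/orP: (r_total i j ij) => rij.
  by case/negP: nv; apply/existsP; exists j; rewrite rij; apply/existsP; exists u; rewrite uv.
by case/negP: nu; apply/existsP; exists i; rewrite rij; apply/existsP; exists v; rewrite vu uv.
Qed.

Lemma ps_sizeE S : ps_size S = \sum_(i < p) size (tnth S i).
Proof. by rewrite /ps_size sumnE big_map big_tuple. Qed.

Lemma ps_size_prune S r :
  ps_size (prune S r) = \sum_(i < p) count (predC (pruned S r i)) (tnth S i).
Proof. by rewrite ps_sizeE; apply: eq_bigr => i _; rewrite tnth_mktuple size_filter. Qed.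

Lemma ps_size_le_prune2 S (r1 r2 : rel 'I_p) :
  ~ has_bridge S 2 -> ~ has_bridge S 3 -> (forall i j, ~~ (r1 i j && r2 i j)) ->
  ps_size S <= ps_size (prune S r1) + ps_size (prune S r2).
Proof.
move=> no2 no3 r12; rewrite !ps_size_prune ps_sizeE -big_split /=.
apply: leq_sum => i _; rewrite -count_predUI -[size _]count_predT.
apply: leq_trans (leq_addr _ _); apply: eq_leq; apply: eq_count => x /=.
rewrite -negb_and; apply/esym/negP.
case/andP=> /existsP[j /andP[r1ij rev_j]] /existsP[j' /andP[r2ij' rev_j']].
by case/negP: (r12 i j); rewrite r1ij (reverses_uniq no2 no3 rev_j rev_j').
Qed.

Lemma ps_size_le S : valid_ps S -> ps_size S <= p * n.
Proof.
move=> /all_tnthP uS; rewrite ps_sizeE -[p in p * n]card_ord -sum_nat_const.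
apply: leq_sum => i _; rewrite -(card_uniqP (uS i)) -[n in _ <= n]card_ord.
exact: max_card.
Qed.

Lemma admissible_empty k : admissible k ([tuple [::] | i < p] : path_system n p).
Proof.
split; first by apply/all_tnthP => i; rewrite tnth_mktuple.
by move=> b _ [b' [_ [v [q [_ [_ [_]]]]]]]; rewrite /path_of tnth_mktuple.
Qed.

Lemma exists_max_admissible k : exists2 S : path_system n p, admissible k S &
  forall S', admissible k S' -> ps_size S' <= ps_size S.
Proof.
pose has_size t := exists2 S : path_system n p, admissible k S & ps_size S = t.
have [|t|t [S admS <-] max_t] := @bounded_ex_max has_size (p * n).
- exists [tuple [::] | i < p]; first exact: admissible_empty.
  by rewrite ps_sizeE big1 // => i _; rewrite tnth_mktuple.
- by move=> [S [validS _] <-]; exact: ps_size_le.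
by exists S => // S' admS'; apply: max_t; exists S'.
Qed.

End PathSystems.

Theorem lemma3p10 :
  exists C : nat, 0 < C /\
  forall (n p : nat) (k : option nat),
    0 < n -> 0 < p -> (match k with Some k0 => 3 <= k0 | None => true end) ->
    exists S : path_system n p,
      admissible k S /\ no_2cycle S /\
      forall S' : path_system n p, admissible k S' ->
        ps_size S' <= C * ps_size S.
Proof.
exists 2; split=> // n p k _ _ k3.
have [S admS maxS] := exists_max_admissible n p k.
have [no2 no3] := bridge23_of_girth k3 admS.2.
have lt_total (i j : 'I_p) : i != j -> (i < j) || (j < i) by rewrite neq_ltn.
have gt_total (i j : 'I_p) : i != j -> (j < i) || (i < j) by rewrite orbC neq_ltn.
have lt_gt_disjoint (i j : 'I_p) : ~~ ((i < j) && (j < i)).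
  by apply/negP => /andP[/ltn_trans lt_ii /lt_ii]; rewrite ltnn.
have := ps_size_le_prune2 no2 no3 lt_gt_disjoint.
set L := prune S _; set G := prune S _ => cover.
have [leGL|ltLG] := leqP (ps_size G) (ps_size L); [exists L | exists G].
- split; first exact: admissible_prune.
  split; first exact: no_2cycle_prune lt_total.
  by move=> S' /maxS; lia.
- split; first exact: admissible_prune.
  split; first exact: no_2cycle_prune gt_total.
  by move=> S' /maxS; lia.
Qed.
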